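(* Let $f\in\mathbb{R}^n\setminus\mathbb{Z}^n$ and $B,L\in\mathcal{C}^n_f$. The following are equivalent: (i) $C_B(R,f)\subseteq C_L(R,f)$ for every $k\in\mathbb{N}$ and every $R\in\mathbb{R}^{n\times k}$; (ii) $B\supseteq L$; (iii) $\psi_{B-f}\le\psi_{L-f}$ pointwise on $\mathbb{R}^n$; (iv) $\rho_f(B,L)\le1$.
   Context: $\mathcal{C}^n_f$ is the family of all $n$-dimensional closed convex subsets of $\mathbb{R}^n$ containing $f$ in their interior. For $B$ closed convex with $0\in\operatorname{int}(B)$, $\psi_B(r)=\inf\{\lambda>0:r\in\lambda B\}$. For $R=(r_1,\dots,r_k)$ and $B\in\mathcal{C}^n_f$, $C_B(R,f)=\{s\in\mathbb{R}^k_{\ge0}:\sum_{j=1}^k s_j\psi_{B-f}(r_j)\ge1\}$. $\rho_f(B,L)=\inf\{\alpha>0:C_B(R,f)\subseteq\frac1\alpha C_L(R,f)$ for all $k\in\mathbb{N}$ and all $R\in\mathbb{R}^{n\times k}\}$. *)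

From HB Require Import structures.
From mathcomp Require Import all_boot all_order all_algebra.
From mathcomp Require Import all_classical all_reals all_analysis.
Set Implicit Arguments. Unset Strict Implicit. Unset Printing Implicit Defensive.
Import Order.TTheory GRing.Theory Num.Theory.
Import numFieldNormedType.Exports.
Local Open Scope classical_set_scope.
Local Open Scope ring_scope.

Definition convexP {R : realType} {n : nat} (A : set 'rV[R]_n) : Prop :=
  forall x y (t : R), A x -> A y -> 0 <= t <= 1 -> A (t *: x + (1 - t) *: y).

(* C^n_f : closed convex sets with f in their interior
   (nonempty interior = n-dimensional) *)
Definition Cnf {R : realType} {n : nat} (f : 'rV[R]_n) (B : set 'rV[R]_n) : Prop :=
  closed B /\ convexP B /\ (interior B) f.

Definition translate {R : realType} {n : nat} (B : set 'rV[R]_n) (f : 'rV[R]_n)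
  : set 'rV[R]_n := [set b - f | b in B].

Definition gauge {R : realType} {n : nat} (B : set 'rV[R]_n) (r : 'rV[R]_n) : R :=
  inf [set l : R | 0 < l /\ exists2 b, B b & r = l *: b].

Definition rcol {R : realType} {n k : nat} (Rm : 'M[R]_(n, k)) (j : 'I_k) : 'rV[R]_n :=
  (col j Rm)^T.

Definition CB {R : realType} {n k : nat} (B : set 'rV[R]_n) (Rm : 'M[R]_(n, k))
  (f : 'rV[R]_n) : set 'rV[R]_k :=
  [set s | (forall j, 0 <= s ord0 j) /\
           1 <= \sum_(j < k) s ord0 j * gauge (translate B f) (rcol Rm j)].

Definition scale_set {R : realType} {k : nat} (c : R) (A : set 'rV[R]_k) : set 'rV[R]_k :=
  [set c *: a | a in A].

(* rho_f(B,L) = inf { alpha > 0 : C_B(R,f) \subseteq (1/alpha) C_L(R,f) for all k, R },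
   taken in the extended reals (inf of the empty set = +oo) *)
Definition rho {R : realType} {n : nat} (f : 'rV[R]_n) (B L : set 'rV[R]_n) : \bar R :=
  ereal_inf [set (a%:E)%E | a in
    [set a : R | 0 < a /\ forall (k : nat) (Rm : 'M[R]_(n, k)),
        CB B Rm f `<=` scale_set a^-1 (CB L Rm f)]].

(* The translates B - f and L - f are closed convex sets with 0 in their
   interior, so each is exactly the sublevel set {psi <= 1} of its gauge: a
   point r with psi(r) <= 1 lies in l A for every l > 1, and closedness lets
   l tend to 1.  Hence L is contained in B iff psi_{B-f} <= psi_{L-f}.  The
   sets C_B(R,f) grow with the gauge values, and conversely testing
   C_B(R,f) within (1/a) C_L(R,f) on a single column r at the point
   s = 1/psi_{B-f}(r) yields psi_{B-f}(r) <= a psi_{L-f}(r); for rho_f(B,L) <= 1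
   this holds for every a > 1, and a can tend to 1. *)

From HB Require Import structures.
From mathcomp Require Import all_boot all_order all_algebra.
From mathcomp Require Import all_classical all_reals all_analysis.
Import Order.TTheory GRing.Theory Num.Theory.
Import numFieldNormedType.Exports.
Local Open Scope classical_set_scope.
Local Open Scope ring_scope.

Set Implicit Arguments.
Unset Strict Implicit.
Unset Printing Implicit Defensive.

Section Gauge.
Variables (R : realType) (n : nat).
Implicit Types (A : set 'rV[R]_n) (r b : 'rV[R]_n) (l : R).

Definition gauge_set A r := [set l : R | 0 < l /\ exists2 b, A b & r = l *: b].

Lemma gaugeE A r : gauge A r = inf (gauge_set A r).
Proof. by []. Qed.

Lemma gauge_set_ge0 A r : lbound (gauge_set A r) 0.
Proof. by move=> l [/ltW]. Qed.

Lemma gauge_ge0 A r : 0 <= gauge A r.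
Proof.
have [ne|/nonemptyPn empty] := pselect (gauge_set A r !=set0).
  exact: lb_le_inf ne (@gauge_set_ge0 A r).
by rewrite gaugeE empty inf0.
Qed.

Lemma gauge_le A r l : gauge_set A r l -> gauge A r <= l.
Proof. by move=> Al; apply: ge_inf => //; exists 0; apply: gauge_set_ge0. Qed.

Lemma gauge_le1 A r : A r -> gauge A r <= 1.
Proof. by move=> Ar; apply: gauge_le; split=> //; exists r; rewrite ?scale1r. Qed.

Lemma gauge_set_neq0 A r : interior A 0 -> gauge_set A r !=set0.
Proof.
move=> A0.
have lim : t *: r @[t --> 0] --> (0 : 'rV[R]_n).
  by rewrite -(scale0r r); apply: cvgZ; [exact: cvg_id | exact: cvg_cst].
case/nbhs_ballP: (lim _ A0) => e e0 Ae.
have e20 : 0 < e / 2 by rewrite divr_gt0.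
exists (e / 2)^-1; split; first by rewrite invr_gt0.
exists (e / 2 *: r); last by rewrite scalerA mulVf ?scale1r // gt_eqF.
apply: Ae; rewrite -ball_normE /= sub0r normrN ger0_norm ?ltW //.
by rewrite ltr_pdivrMr // ltr_pMr // ltr1n.
Qed.

Lemma convex_scale_mem A b t : convexP A -> A 0 -> A b -> 0 <= t <= 1 -> A (t *: b).
Proof. by move=> cvA A0 Ab t01; have := cvA _ _ _ Ab A0 t01; rewrite scaler0 addr0. Qed.

Lemma gauge_set_ge A r l0 l : convexP A -> A 0 ->
  gauge_set A r l0 -> l0 <= l -> gauge_set A r l.
Proof.
move=> cvA A0 [l00 [b Ab ->]] le.
have l0' : 0 < l by apply: lt_le_trans le.
split => //; exists ((l0 / l) *: b); last first.
  by rewrite scalerA mulrCA divff ?mulr1 // gt_eqF.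
apply: convex_scale_mem => //.
by rewrite divr_ge0 ?(ltW l00) ?(ltW l0') //= ler_pdivrMr // mul1r.
Qed.

Lemma gauge_lt A r l : convexP A -> interior A 0 -> gauge A r < l -> gauge_set A r l.
Proof.
move=> cvA A0; rewrite gaugeE => /(inf_lt (gauge_set_neq0 r A0)) [l0 Al0 lt].
exact: gauge_set_ge cvA (nbhs_singleton A0) Al0 (ltW lt).
Qed.

Lemma gauge_le1_mem A r : closed A -> convexP A -> interior A 0 -> gauge A r <= 1 -> A r.
Proof.
move=> clA cvA A0 g1.
have lim : l^-1 *: r @[l --> (1 : R)^'+] --> r.
  have lim1 : l^-1 *: r @[l --> (1 : R)] --> (1^-1 *: r : 'rV[R]_n).
    by apply: cvgZ; [exact: cvgV (oner_neq0 _) cvg_id | exact: cvg_cst].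
  by rewrite invr1 scale1r in lim1; exact: cvg_at_right_filter.
apply: (closed_cvg _ clA _ _ lim); near=> l.
have [l0 [b Ab ->]] : gauge_set A r l.
  by apply: gauge_lt => //; apply: le_lt_trans g1 _; near: l; exact: nbhs_right_gt.
by rewrite scalerA mulVf ?scale1r // gt_eqF.
Unshelve. all: by end_near.
Qed.

Lemma le_gauge A1 A2 r : A1 `<=` A2 -> interior A1 0 -> gauge A2 r <= gauge A1 r.
Proof.
move=> sub A10; rewrite [X in _ <= X]gaugeE.
apply: lb_le_inf (gauge_set_neq0 r A10) _ => l [l0 [b A1b ->]].
by apply: gauge_le; split=> //; exists b => //; apply: sub.
Qed.

Lemma subset_gaugeP A1 A2 : closed A2 -> convexP A2 -> interior A2 0 -> interior A1 0 ->
  A1 `<=` A2 <-> forall r, gauge A2 r <= gauge A1 r.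
Proof.
move=> clA2 cvA2 A20 A10; split=> [sub r|le r A1r]; first exact: le_gauge.
exact: gauge_le1_mem clA2 cvA2 A20 (le_trans (le r) (gauge_le1 A1r)).
Qed.

End Gauge.

Section Translate.
Variables (R : realType) (n : nat) (f : 'rV[R]_n).
Implicit Types (B L : set 'rV[R]_n).

Lemma translateE B : translate B f = [set b | B (b + f)].
Proof.
apply/seteqP; split=> [_ [x Bx <-]|b Bb]; first by rewrite /= subrK.
by exists (b + f); rewrite ?addrK.
Qed.

Lemma subset_translate L B : translate L f `<=` translate B f <-> L `<=` B.
Proof.
rewrite !translateE; split=> [sub x Lx|sub b]; last exact: sub.
by rewrite -(subrK f x); apply: sub; rewrite /= subrK.
Qed.

Lemma Cnf_translate B : Cnf f B -> Cnf 0 (translate B f).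
Proof.
case=> clB [cvB Bf]; rewrite translateE; split; [|split].
- have addf_cont : continuous (fun b : 'rV[R]_n => b + f).
    by move=> x; apply: continuousD; [exact: cvg_id | exact: cst_continuous].
  exact: (proj1 (continuous_closedP _) addf_cont B clB).
- move=> x y t Bx By t01; have := cvB _ _ _ Bx By t01.
  by rewrite !scalerDr addrACA -scalerDl subrKC scale1r.
- by move/nbhs0P : Bf; apply: filterS => e; rewrite addrC.
Qed.

End Translate.

Lemma ler_gt1_mul (R : numFieldType) (x y : R) :
  0 <= y -> (forall a, 1 < a -> x <= a * y) -> x <= y.
Proof.
move=> y0 le; apply/ler_addgt0Pr => e e0.
have y1 : 0 < y + 1 by rewrite ltr_wpDl.
apply: le_trans (le (1 + e / (y + 1)) _) _; first by rewrite ltrDl divr_gt0.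
rewrite mulrDl mul1r lerD2l mulrAC ler_pdivrMr // ler_pM2l //.
by rewrite lerDl.
Qed.

Section Cones.
Variables (R : realType) (n : nat) (f : 'rV[R]_n) (B L : set 'rV[R]_n).

Lemma scale_set1 k (A : set 'rV[R]_k) : scale_set 1 A = A.
Proof.
apply/seteqP; split=> [_ [a Aa <-]|a Aa]; first by rewrite scale1r.
by exists a; rewrite ?scale1r.
Qed.

Lemma rcol_trmx (r : 'rV[R]_n) : rcol r^T ord0 = r.
Proof. by apply/rowP => i; rewrite !mxE. Qed.

Lemma CB_subset k (Rm : 'M[R]_(n, k)) :
  (forall r, gauge (translate B f) r <= gauge (translate L f) r) ->
  CB B Rm f `<=` CB L Rm f.
Proof.
move=> le s [s0 hs]; split=> //; apply: le_trans hs _.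
by apply: ler_sum => j _; apply: ler_wpM2l.
Qed.

Lemma gauge_le_of_CB_subset a r : 0 < a ->
  CB B r^T f `<=` scale_set a^-1 (CB L r^T f) ->
  gauge (translate B f) r <= a * gauge (translate L f) r.
Proof.
move=> a0 sub.
have [->|gB0] := eqVneq (gauge (translate B f) r) 0.
  by rewrite mulr_ge0 ?gauge_ge0 ?ltW.
have gBp : 0 < gauge (translate B f) r by rewrite lt0r gB0 gauge_ge0.
set s : 'rV[R]_1 := \row_(j < 1) (gauge (translate B f) r)^-1.
have Bs : CB B r^T f s.
  split=> [j|]; first by rewrite mxE invr_ge0 ltW.
  by rewrite big_ord1 mxE rcol_trmx mulVf.
have [s' [_ Ls'] s'E] := sub _ Bs; move: Ls'.
have {s'E}-> : s' = a *: s by rewrite -s'E scalerA divff ?scale1r // gt_eqF.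
by rewrite big_ord1 rcol_trmx !mxE mulrAC ler_pdivlMr // mul1r.
Qed.

Lemma rho_le1 :
  (forall k (Rm : 'M[R]_(n, k)), CB B Rm f `<=` CB L Rm f) -> (rho f B L <= 1%:E)%E.
Proof.
move=> sub; apply: ereal_inf_lbound; exists 1 => //.
by split=> [|k Rm]; [exact: ltr01 | rewrite invr1 scale_set1].
Qed.

Lemma gauge_le_of_rho_lt a r : (rho f B L < a%:E)%E ->
  gauge (translate B f) r <= a * gauge (translate L f) r.
Proof.
case/ereal_inf_lt => _ [a' [a'0 sub] <-]; rewrite lte_fin => a'a.
apply: le_trans (gauge_le_of_CB_subset a'0 (sub 1%N r^T)) _.
by rewrite ler_wpM2r ?gauge_ge0 ?ltW.
Qed.

End Cones.

Theorem proposition3p11 (R : realType) (n : nat) (f : 'rV[R]_n)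
  (B L : set 'rV[R]_n) :
  ~ (forall i, f ord0 i \is a Num.int) ->
  Cnf f B -> Cnf f L ->
  [/\ ((forall (k : nat) (Rm : 'M[R]_(n, k)), CB B Rm f `<=` CB L Rm f) <-> L `<=` B),
      (L `<=` B <-> (forall r, gauge (translate B f) r <= gauge (translate L f) r)) &
      ((forall r, gauge (translate B f) r <= gauge (translate L f) r) <->
         (rho f B L <= 1%:E)%E)].
Proof.
move=> _ HB HL.
have [clB [cvB B0]] := Cnf_translate HB.
have [_ [_ L0]] := Cnf_translate HL.
have subset_gauge : L `<=` B <-> forall r, gauge (translate B f) r <= gauge (translate L f) r.
  by rewrite -subset_translate; exact: subset_gaugeP.
have gauge_CB : (forall r, gauge (translate B f) r <= gauge (translate L f) r) <->
    forall k (Rm : 'M[R]_(n, k)), CB B Rm f `<=` CB L Rm f.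
  split=> [le k Rm|sub r]; first exact: CB_subset.
  rewrite -[X in _ <= X]mul1r; apply: gauge_le_of_CB_subset ltr01 _.
  by rewrite invr1 scale_set1.
split=> //; first by rewrite subset_gauge gauge_CB.
split=> [le|rho1 r]; first by apply: rho_le1; rewrite -gauge_CB.
apply: ler_gt1_mul (gauge_ge0 _ _) _ => a a1.
by apply: gauge_le_of_rho_lt; apply: le_lt_trans rho1 _; rewrite lte_fin.
Qed.
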